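(* Let $\rho$ be a state of $n$ finite-dimensional systems $1,\dots,n$. Then its total negativity of quantumness equals the minimum disturbance caused by local complete projective measurements on all subsystems, as quantified by the $l_1$-norm in the basis of the measurement: $$Q^{\{1,\dots,n\}}_{\mathcal N}(\rho)=\min_{\bigotimes_{k=1}^n\mathcal B_k}\frac12\Big\|\rho-\big(\textstyle\bigotimes_{k=1}^n\Pi_{\mathcal B_k}\big)[\rho]\Big\|_{l_1}^{\bigotimes_k\mathcal B_k},$$ the minimum being over orthonormal bases $\mathcal B_k$ of each system $k$.
   Context: For an orthonormal basis $\mathcal B=\{|e_i\rangle\}$ of a system, $\Pi_{\mathcal B}[X]=\sum_i|e_i\rangle\langle e_i|X|e_i\rangle\langle e_i|$ (acting on that tensor factor). For a matrix $X$ and orthonormal basis $\{|f_l\rangle\}$, $\|X\|_{l_1}=\sum_{l,l'}|\langle f_l|X|f_{l'}\rangle|$. Negativity: $\mathcal N_{X:Y}(\tau)=(\|\tau^\Gamma\|_1-1)/2$, $\tau^\Gamma$ partial transpose on one party, $\|\cdot\|_1$ trace norm. For a system $k$ of dimension $m$ with orthonormal basis $\{|a_i\rangle\}$, the measurement interaction is the isometry $V_k:k\to k\otimes k'$ ($k'$ $m$-dimensional with computational basis $\{|i\rangle\}$), $V_k|a_i\rangle=|a_i\rangle|i\rangle$. The total negativity of quantumness is $Q^{\{1,\dots,n\}}_{\mathcal N}(\rho)=\min\mathcal N_{\{1,\dots,n\}:\{1',\dots,n'\}}\big((\bigotimes_kV_k)\rho(\bigotimes_kV_k)^\dagger\big)$,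 minimized over all choices of local orthonormal bases. *)

From HB Require Import structures.
From mathcomp Require Import all_boot all_order all_algebra spectral.
From mathcomp Require Import complex.
From mathcomp Require Import classical_sets reals.

Set Implicit Arguments.
Unset Strict Implicit.
Unset Printing Implicit Defensive.

Import Order.TTheory GRing.Theory Num.Theory.
Local Open Scope ring_scope.

Section QuantumDefs.
Variable R : realType.
Local Notation C := R[i].

(* A linear map from C^J to C^I, given by its matrix entries <i|X|j>,        *)
(* with I, J finite index types (the computational basis).                   *)
Definition lmap (I J : finType) := I -> J -> C.

Definition lmap_mul (I J K : finType) (A : lmap I J) (B : lmap J K) : lmap I K :=
  fun i k => \sum_(j : J) A i j * B j k.

Definition adj (I J : finType) (A : lmap I J) : lmap J I :=
  fun j i => Num.conj (A i j).

Definition lmap_sub (I J : finType) (A B : lmap I J) : lmap I J :=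
  fun i j => A i j - B i j.

Definition mx_of (I : finType) (X : lmap I I) : 'M[C]_#|I| :=
  \matrix_(a, b) X (enum_val a) (enum_val b).

(* Trace norm ||X||_1 = Tr sqrt(X^dagger X) = sum of the singular values of X,
   i.e. the sum of the square roots of the eigenvalues of X^dagger X
   (these eigenvalues are given by the spectral decomposition of the
   normal matrix X^dagger X). *)
Definition trace_norm (I : finType) (X : lmap I I) : R :=
  let M := mx_of X in
  \sum_(a < #|I|)
    Num.sqrt (complex.Re (spectral_diag ((map_mx Num.conj M)^T *m M) 0 a)).

Definition is_state (I : finType) (rho : lmap I I) : Prop :=
  [/\ forall x y, rho y x = Num.conj (rho x y),
      forall v : I -> C,
        0 <= \sum_(x : I) \sum_(y : I) Num.conj (v x) * rho x y * v y
    & \sum_(x : I) rho x x = 1].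

Definition ptranspose2 (I J : finType) (tau : lmap (I * J)%type (I * J)%type)
  : lmap (I * J)%type (I * J)%type :=
  fun xi yl => tau (xi.1, yl.2) (yl.1, xi.2).

Definition negativity (I J : finType) (tau : lmap (I * J)%type (I * J)%type) : R :=
  (trace_norm (ptranspose2 tau) - 1) / 2.

(* n systems; system k has dimension d k.  The computational basis of the   *)
(* joint system 1...n is indexed by the multi-indices [msys d].             *)
Definition msys (n : nat) (d : 'I_n -> nat) : finType :=
  {dffun forall k : 'I_n, 'I_(d k)}.

(* A local orthonormal basis B_k of system k is encoded by a unitary matrix  *)
(* U k : 'M_(d k) whose rows are the basis vectors: |a^k_i> has components  *)
(* <x|a^k_i> = U k i x.  (U k \is unitarymx iff these rows are orthonormal.) *)
Definition local_bases (n : nat) (d : 'I_n -> nat) :=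
  forall k : 'I_n, 'M[C]_(d k).

Definition orthonormal_bases n (d : 'I_n -> nat) (U : local_bases d) : Prop :=
  forall k, U k \is unitarymx.

Definition pbasis n (d : 'I_n -> nat) (U : local_bases d) (i x : msys d) : C :=
  \prod_(k < n) U k (i k) (x k).

Definition melem n (d : 'I_n -> nat) (U : local_bases d)
  (X : lmap (msys d) (msys d)) (i j : msys d) : C :=
  \sum_(x : msys d) \sum_(y : msys d)
     Num.conj (pbasis U i x) * X x y * pbasis U j y.

(* (x)_k Pi_{B_k} [X] = sum_i |E_i><E_i| X |E_i><E_i|. *)
Definition dephase n (d : 'I_n -> nat) (U : local_bases d)
  (X : lmap (msys d) (msys d)) : lmap (msys d) (msys d) :=
  fun x y => \sum_(i : msys d)
     pbasis U i x * melem U X i i * Num.conj (pbasis U i y).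

Definition l1norm n (d : 'I_n -> nat) (U : local_bases d)
  (X : lmap (msys d) (msys d)) : R :=
  \sum_(i : msys d) \sum_(j : msys d) complex.Re `|melem U X i j|.

(* Measurement interaction V_k : k -> k (x) k', V_k |a_i> = |a_i>|i>, i.e.   *)
(* V_k = sum_i |a_i>|i><a_i|; entries <x,i'|V_k|y> = <x|a_{i'}> <a_{i'}|y>. *)
Definition meas_iso n (d : 'I_n -> nat) (U : local_bases d) (k : 'I_n)
  : lmap ('I_(d k) * 'I_(d k))%type 'I_(d k) :=
  fun xi y => U k xi.2 xi.1 * Num.conj (U k xi.2 y).

(* (x)_k V_k : (1...n) -> (1...n)(1'...n') (systems reordered so that the   *)
(* unprimed systems come first, the primed ancillas second).                *)
Definition meas_iso_all n (d : 'I_n -> nat) (U : local_bases d)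
  : lmap (msys d * msys d)%type (msys d) :=
  fun xi y => \prod_(k < n) meas_iso (k := k) U (xi.1 k, xi.2 k) (y k).

Definition premeasure n (d : 'I_n -> nat) (U : local_bases d)
  (rho : lmap (msys d) (msys d)) : lmap (msys d * msys d)%type (msys d * msys d)%type :=
  lmap_mul (lmap_mul (meas_iso_all U) rho) (adj (meas_iso_all U)).

Definition total_neg_quantumness n (d : 'I_n -> nat)
  (rho : lmap (msys d) (msys d)) : R :=
  inf [set r : R | exists U : local_bases d,
         orthonormal_bases U /\ r = negativity (premeasure U rho)].

End QuantumDefs.

(* In the product basis {E_i} of the measurement, (x)_k V_k maps rho to
   sum_{a,b} rho_ab |E_a>|a><E_b|<b|, whose partial transpose on the ancillas
   is sum_{a,b} rho_ab |E_a>|b><E_b|<a|.  Both families |E_a>|b> and |E_b>|a>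
   are orthonormal, so this is a singular value decomposition with singular
   values |rho_ab|: the trace norm is the l1-norm of rho in that basis.  The
   diagonal entries rho_aa are nonnegative and sum to 1, hence the l1-norm of
   rho minus its dephased version is exactly that l1-norm minus 1, so the two
   quantities minimised in the theorem coincide basis by basis. *)

From HB Require Import structures.
From mathcomp Require Import all_boot all_order all_algebra spectral.
From mathcomp Require Import complex.
From mathcomp Require Import classical_sets reals.
From mathcomp Require Import ring.
Set Implicit Arguments.
Unset Strict Implicit.
Unset Printing Implicit Defensive.

Import Order.TTheory GRing.Theory Num.Theory.
Local Open Scope ring_scope.

Lemma sum_dffun_prod (K : comPzSemiRingType) (I : finType) (T_ : I -> finType)
  (F : forall i, T_ i -> K) :
  \sum_(x : {dffun forall i, T_ i}) \prod_i F i (x i) = \prod_i \sum_(t : T_ i) F i t.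
Proof.
rewrite (reindex (@dffun_of_fprod I T_)); last first.
  by apply: onW_bij; exact: dffun_of_fprod_bij.
transitivity (\sum_(t : fprod T_) \prod_(i in I) [ffun t => F i t] (t i)).
  by apply: eq_bigr => t _; apply: eq_bigr => i _; rewrite !ffunE.
rewrite (@big_fprod K 0 1 *%R +%R I T_ (fun i => [ffun t => F i t])).
rewrite -(@bigA_distr_big_dep K 0 1 *%R +%R I _ (tagged_with T_)
  (fun i j => untag 0 [ffun t => F i t] j)).
apply: eq_bigr => i _.
rewrite -(@big_tag K 0 +%R I T_ (fun i t => [ffun t => F i t] t)).
by apply: eq_bigr => t _; rewrite ffunE.
Qed.

Lemma prod_dffun_eq (K : comPzSemiRingType) (I : finType) (T_ : I -> finType)
  (x y : {dffun forall i, T_ i}) :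
  \prod_(i : I) ((x i == y i)%:R : K) = (x == y)%:R.
Proof.
have [->|neq_xy] := eqVneq x y; first by rewrite big1 // => i _; rewrite eqxx.
have [i neq_i] : exists i, x i != y i.
  apply/existsP; apply: contraNT neq_xy => /existsPn eq_xy.
  by apply/eqP/ffunP => i; apply/eqP; move: (eq_xy i); rewrite negbK.
by rewrite (bigD1 i) //= (negbTE neq_i) mul0r.
Qed.

Section Orthonormal.
Variable C : numClosedFieldType.

Definition orthonormal (I J : finType) (e : I -> J -> C) : Prop :=
  forall i i', \sum_x e i x * (e i' x)^* = (i == i')%:R.

Lemma unitarymx_orthonormal n (M : 'M[C]_n) :
  M \is unitarymx -> orthonormal (fun i j => M i j).
Proof.
move=> /unitarymxP /matrixP uM i i'; move: (uM i i'); rewrite !mxE => <-.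
by apply: eq_bigr => j _; rewrite !mxE.
Qed.

Lemma unitarymx_orthonormal_tr n (M : 'M[C]_n) :
  M \is unitarymx -> orthonormal (fun j i => M i j).
Proof.
rewrite -trmx_unitary => /unitarymx_orthonormal oM j j'.
by rewrite -oM; apply: eq_bigr => i _; rewrite !mxE.
Qed.

Lemma orthonormal_delta (I : finType) : orthonormal (fun i j : I => (i == j)%:R).
Proof.
move=> i i'; rewrite (bigD1 i) //= big1 => [|j neq_ji]; last first.
  by rewrite eq_sym (negbTE neq_ji) mul0r.
by rewrite eqxx mul1r rmorph_nat addr0 eq_sym.
Qed.

Lemma orthonormal_tensor (I J K L : finType) (e : I -> J -> C) (f : K -> L -> C) :
  orthonormal e -> orthonormal f ->
  orthonormal (fun (r : I * K) (p : J * L) => e r.1 p.1 * f r.2 p.2).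
Proof.
move=> oe of' [i k] [i' k']; rewrite xpair_eqE -mulnb natrM -oe -of' big_distrlr.
rewrite pair_bigA; apply: eq_bigr => -[x a] _ /=.
by rewrite rmorphM /=; ring.
Qed.

Lemma orthonormal_comp (I I' J : finType) (e : I -> J -> C) (s : I' -> I) :
  injective s -> orthonormal e -> orthonormal (e \o s).
Proof. by move=> s_inj oe r r'; rewrite /= oe (inj_eq s_inj). Qed.

Lemma orthonormal_prod (K : finType) (I_ J_ : K -> finType)
  (e : forall k, I_ k -> J_ k -> C) : (forall k, orthonormal (e k)) ->
  orthonormal (fun (i : {dffun forall k, I_ k}) (x : {dffun forall k, J_ k}) =>
                 \prod_k e k (i k) (x k)).
Proof.
move=> oe i i'; rewrite -prod_dffun_eq.
under [RHS]eq_bigr do rewrite -oe.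
rewrite -(@sum_dffun_prod C _ J_ (fun k t => e k (i k) t * (e k (i' k) t)^*)).
by apply: eq_bigr => x _; rewrite rmorph_prod -big_split.
Qed.

End Orthonormal.

Lemma sum_enum_val (V : nmodType) (T : finType) (F : T -> V) :
  \sum_(a < #|T|) F (enum_val a) = \sum_t F t.
Proof. by rewrite -big_enum_val. Qed.

Section Similarity.
Variable F : fieldType.

Lemma char_poly_similar n (P A : 'M[F]_n) : P \in unitmx ->
  char_poly (invmx P *m A *m P) = char_poly A.
Proof.
move=> P_unit.
set Pi := map_mx polyC (invmx P); set Pp := map_mx polyC P.
have PiP : Pi *m Pp = 1%:M by rewrite -map_mxM mulVmx // map_mx1.
have detPiP : \det Pi * \det Pp = 1 by rewrite -det_mulmx PiP det1.
rewrite /char_poly /char_poly_mx !map_mxM -/Pi -/Pp.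
have -> : 'X%:M - Pi *m map_mx polyC A *m Pp = Pi *m ('X%:M - map_mx polyC A) *m Pp.
  by rewrite mulmxBr mulmxBl; congr (_ - _); rewrite scalar_mxC -mulmxA PiP mulmx1.
by rewrite !det_mulmx mulrAC detPiP mul1r.
Qed.

Lemma char_poly_diag n (v : 'rV[F]_n) :
  char_poly (diag_mx v) = \prod_(i < n) ('X - (v 0 i)%:P).
Proof.
rewrite char_poly_trig ?diag_mx_is_trig //.
by apply: eq_bigr => i _; rewrite mxE eqxx mulr1n.
Qed.

Lemma sum_diag_similar n (P Q : 'M[F]_n) (v w : 'rV[F]_n) (V : nmodType) (f : F -> V) :
  P \in unitmx -> Q \in unitmx ->
  invmx P *m diag_mx v *m P = invmx Q *m diag_mx w *m Q ->
  \sum_(i < n) f (v 0 i) = \sum_(i < n) f (w 0 i).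
Proof.
move=> P_unit Q_unit eq_vw.
have : char_poly (diag_mx v) = char_poly (diag_mx w).
  by rewrite -(char_poly_similar _ P_unit) eq_vw char_poly_similar.
rewrite !char_poly_diag => eq_char.
have perm_vw :
    perm_eq [seq v 0 i | i <- index_enum 'I_n] [seq w 0 i | i <- index_enum 'I_n].
  by apply: prod_XsubC_eq; rewrite !big_map.
by have := @perm_big V +%R 0 F _ _ xpredT f perm_vw; rewrite !big_map.
Qed.

End Similarity.

Section TraceNorm.
Variable R : realType.
Local Notation C := R[i].

Lemma Re_sum (T : finType) (F : T -> C) :
  complex.Re (\sum_t F t) = \sum_t complex.Re (F t).
Proof. by apply: big_morph => [[a b] [c e]|]. Qed.

Lemma sqrt_Re_normsq (z : C) : Num.sqrt (complex.Re (z^* * z)) = complex.Re `|z|.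
Proof. by rewrite normc_def; case: z => a b /=; congr (Num.sqrt _); ring. Qed.

Lemma trace_norm_unitary_gram (I : finType) (X W : lmap R I I) (D : I -> C) :
  orthonormal W ->
  (forall p q, \sum_x (X x p)^* * X x q = \sum_r (W r p)^* * D r * W r q) ->
  trace_norm X = \sum_r Num.sqrt (complex.Re (D r)).
Proof.
move=> oW gramX; rewrite /trace_norm.
set Wm := mx_of W; set Dv : 'rV_#|I| := \row_a D (enum_val a).
have Wm_unitary : Wm \is unitarymx.
  apply/unitarymxP/matrixP => a b; rewrite !mxE.
  under eq_bigr do rewrite !mxE.
  by rewrite (sum_enum_val (fun p => W _ p * (W _ p)^*)) oW (inj_eq enum_val_inj).
set G := (map_mx Num.conj (mx_of X))^T *m mx_of X.
have gram_diag : G = invmx Wm *m diag_mx Dv *m Wm.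
  rewrite invmx_unitary // mul_mx_diag; apply/matrixP => a b; rewrite !mxE.
  under eq_bigr do rewrite !mxE.
  under [RHS]eq_bigr do rewrite !mxE.
  rewrite (sum_enum_val (fun x => (X x _)^* * X x _)) gramX.
  by rewrite (sum_enum_val (fun r => (W r (enum_val a))^* * D r * W r (enum_val b))).
have /orthomx_spectralP G_spectral : G \is normalmx.
  by apply/orthomx_spectral_subproof; exists (Wm, Dv).
rewrite (@sum_diag_similar _ _ (spectralmx G) Wm (spectral_diag G) Dv _
  (fun z => Num.sqrt (complex.Re z)) (spectral_unit G) (unitarymx_unit Wm_unitary));
  last by rewrite -G_spectral.
under eq_bigr do rewrite mxE.
exact: (sum_enum_val (fun r => Num.sqrt (complex.Re (D r)))).
Qed.

Lemma gram_svd (I : finType) (X u v : lmap R I I) (s : I -> C) :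
  orthonormal u -> (forall x y, X x y = \sum_r u r x * s r * (v r y)^*) ->
  forall p q, \sum_x (X x p)^* * X x q = \sum_r v r p * ((s r)^* * s r) * (v r q)^*.
Proof.
move=> ou Xsvd p q.
have -> : \sum_x (X x p)^* * X x q = \sum_r \sum_r'
    (s r)^* * v r p * s r' * (v r' q)^* * \sum_x u r' x * (u r x)^*.
  under eq_bigr do rewrite !Xsvd rmorph_sum big_distrlr /=.
  rewrite exchange_big; apply: eq_bigr => r _.
  rewrite exchange_big; apply: eq_bigr => r' _.
  rewrite mulr_sumr; apply: eq_bigr => x _.
  by rewrite !rmorphM /= conjCK; ring.
apply: eq_bigr => r _; rewrite (bigD1 r) //= ou eqxx big1 ?addr0 => [|r' neq_r'r].
  by rewrite mulr1; ring.
by rewrite ou (negbTE neq_r'r) mulr0.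
Qed.

Lemma trace_norm_svd (I : finType) (X u v : lmap R I I) (s : I -> C) :
  orthonormal u -> orthonormal v ->
  (forall x y, X x y = \sum_r u r x * s r * (v r y)^*) ->
  trace_norm X = \sum_r complex.Re `|s r|.
Proof.
move=> ou ov Xsvd.
rewrite (@trace_norm_unitary_gram _ _ (fun r p => (v r p)^*) (fun r => (s r)^* * s r)).
- by apply: eq_bigr => r _; rewrite sqrt_Re_normsq.
- move=> r r'; rewrite /= -(rmorph_nat Num.conj) -ov rmorph_sum.
  by apply: eq_bigr => p _; rewrite rmorphM /= mulrC.
- by move=> p q; rewrite (gram_svd ou Xsvd); apply: eq_bigr => r _; rewrite conjCK.
Qed.

End TraceNorm.

Section Measurement.
Variables (R : realType) (n : nat) (d : 'I_n -> nat) (U : local_bases R d).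
Hypothesis U_orthonormal : orthonormal_bases U.
Local Notation I := (msys d).
Local Notation E := (pbasis U).

Lemma pbasis_orthonormal : orthonormal E.
Proof. exact: orthonormal_prod (fun k => unitarymx_orthonormal (U_orthonormal k)). Qed.

Lemma pbasis_complete : orthonormal (fun x i => E i x).
Proof. exact: orthonormal_prod (fun k => unitarymx_orthonormal_tr (U_orthonormal k)). Qed.

Lemma meas_iso_allE (x a y : I) : meas_iso_all U (x, a) y = E a x * (E a y)^*.
Proof. by rewrite /meas_iso_all /meas_iso /pbasis rmorph_prod -big_split. Qed.

Lemma premeasureE (rho : lmap R I I) (x a y b : I) :
  premeasure U rho (x, a) (y, b) = E a x * melem U rho a b * (E b y)^*.
Proof.
rewrite /premeasure /lmap_mul /adj /melem.
under eq_bigr => z _ do rewrite meas_iso_allE big_distrl /=.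
rewrite exchange_big /= mulr_sumr mulr_suml; apply: eq_bigr => z _.
rewrite mulr_sumr mulr_suml; apply: eq_bigr => w _.
by rewrite meas_iso_allE rmorphM /= conjCK; ring.
Qed.

Lemma trace_norm_premeasure (rho : lmap R I I) :
  trace_norm (ptranspose2 (premeasure U rho)) = l1norm U rho.
Proof.
(* u_(i,j) = |E_i>|j> and v_(i,j) = |E_j>|i>. *)
have u_orthonormal := orthonormal_tensor pbasis_orthonormal (@orthonormal_delta _ I).
have swap_inj : injective (fun r : I * I => (r.2, r.1)) by move=> [? ?] [? ?] [-> ->].
have v_orthonormal := orthonormal_comp swap_inj u_orthonormal.
rewrite /l1norm pair_bigA; apply: (trace_norm_svd u_orthonormal v_orthonormal).
move=> [x a] [y b]; rewrite /ptranspose2 premeasureE (bigD1 (b, a)) //=.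
rewrite big1 => [|[i j] /=]; last first.
  by rewrite xpair_eqE negb_and => /orP[] /negbTE ->; rewrite ?(mulr0, mul0r, rmorph0).
by rewrite !eqxx !mulr1 addr0.
Qed.

Lemma melem_sub (A B : lmap R I I) (i j : I) :
  melem U (lmap_sub A B) i j = melem U A i j - melem U B i j.
Proof.
rewrite /melem /lmap_sub -sumrB; apply: eq_bigr => x _.
by rewrite -sumrB; apply: eq_bigr => y _; ring.
Qed.

Variable rho : lmap R I I.

Lemma melem_dephase (i j : I) :
  melem U (dephase U rho) i j = (i == j)%:R * melem U rho i i.
Proof.
transitivity (\sum_k melem U rho k k *
    ((\sum_x E k x * (E i x)^*) * (\sum_y E j y * (E k y)^*))).
  rewrite {1}/melem /dephase; under [RHS]eq_bigr do rewrite big_distrlr mulr_sumr /=.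
  rewrite [RHS]exchange_big; apply: eq_bigr => x _.
  under [RHS]eq_bigr do rewrite mulr_sumr.
  rewrite [RHS]exchange_big; apply: eq_bigr => y _.
  by rewrite mulr_sumr mulr_suml; apply: eq_bigr => k _; ring.
under eq_bigr do rewrite !pbasis_orthonormal.
rewrite (bigD1 i) //= big1 => [|k neq_ki]; last by rewrite (negbTE neq_ki) mul0r mulr0.
by rewrite eqxx mul1r addr0 mulrC eq_sym.
Qed.

Lemma sum_melem_diag : \sum_i melem U rho i i = \sum_x rho x x.
Proof.
rewrite exchange_big; apply: eq_bigr => x _; rewrite exchange_big.
transitivity (\sum_y rho x y * \sum_i E i y * (E i x)^*).
  by apply: eq_bigr => y _; rewrite mulr_sumr; apply: eq_bigr => i _; ring.
under eq_bigr do rewrite pbasis_complete.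
rewrite (bigD1 x) //= big1 => [|y neq_yx]; last by rewrite (negbTE neq_yx) mulr0.
by rewrite eqxx mulr1 addr0.
Qed.

Hypothesis rho_state : is_state rho.

Lemma melem_diag_ge0 (i : I) : 0 <= melem U rho i i.
Proof. by case: rho_state => _ rho_psd _; exact: rho_psd. Qed.

Lemma l1norm_sub_dephase : l1norm U (lmap_sub rho (dephase U rho)) = l1norm U rho - 1.
Proof.
have l1_row i : \sum_j complex.Re `|melem U rho i j - (i == j)%:R * melem U rho i i|
    = \sum_j complex.Re `|melem U rho i j| - complex.Re (melem U rho i i).
  rewrite (bigD1 i) // [in RHS](bigD1 i) // eqxx mul1r subrr normr0.
  rewrite (ger0_norm (melem_diag_ge0 i)) -[complex.Re 0]/(0 : R).
  under eq_bigr => j neq_ji do rewrite eq_sym (negbTE neq_ji) mul0r subr0.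
  by rewrite /= add0r addrC addrK.
rewrite /l1norm; under eq_bigr do under eq_bigr do rewrite melem_sub melem_dephase.
under eq_bigr do rewrite l1_row.
by rewrite sumrB -Re_sum sum_melem_diag; case: rho_state => _ _ ->.
Qed.

Lemma negativity_premeasure :
  negativity (premeasure U rho) = l1norm U (lmap_sub rho (dephase U rho)) / 2.
Proof. by rewrite /negativity trace_norm_premeasure l1norm_sub_dephase. Qed.

End Measurement.

Theorem corollary2 (R : realType) (n : nat) (d : 'I_n -> nat)
  (rho : lmap R (msys d) (msys d)) :
  is_state rho ->
  total_neg_quantumness rho =
  inf [set r : R | exists U : local_bases R d,
         orthonormal_bases U /\
         r = l1norm U (lmap_sub rho (dephase U rho)) / 2].
Proof.
move=> rho_state; rewrite /total_neg_quantumness; congr (inf _).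
apply/seteqP; split => r /= [U [U_orthonormal ->]]; exists U; split => //;
  by rewrite (negativity_premeasure U_orthonormal rho_state).
Qed.
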